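(* Let $d\ge 3$ be an integer such that $d$ is odd or $d\equiv 0\pmod 4$. Then the hypercube $Q_d$ is $\mathbb{Z}_2^d$-distance antimagic.
   Context: $Q_d$ is the graph with vertex set $\mathbb{Z}_2^d$ (binary strings of length $d$), two vertices adjacent iff they differ in exactly one coordinate. For a graph $G$ with $n$ vertices and an Abelian group $A$ of order $n$ (written additively), and a bijection $f:V(G)\to A$, the weight of $x$ is $w_f(x)=\sum_{y\in N(x)} f(y)$ computed in $A$ ($N(x)$ the open neighbourhood). $f$ is an $A$-distance antimagic labelling if all weights are pairwise distinct; $G$ is $A$-distance antimagic if it admits such a labelling. *)

From HB Require Import structures.
From mathcomp Require Import all_boot all_order all_algebra.
Set Implicit Arguments. Unset Strict Implicit. Unset Printing Implicit Defensive.
Import GRing.Theory.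
Local Open Scope ring_scope.

Definition weight (V : finType) (A : zmodType) (adj : rel V) (f : V -> A) (x : V) : A :=
  \sum_(y | adj x y) f y.

Definition distance_antimagic_labelling (V : finType) (A : finZmodType)
    (adj : rel V) (f : V -> A) : Prop :=
  bijective f /\ injective (weight adj f).

Definition distance_antimagic (V : finType) (A : finZmodType) (adj : rel V) : Prop :=
  #|V| = #|A| /\ exists f : V -> A, distance_antimagic_labelling adj f.

Definition Z2d (d : nat) := 'rV['Z_2]_d.

Definition hypercube_adj (d : nat) : rel (Z2d d) :=
  fun x y => #|[set i : 'I_d | x ord0 i != y ord0 i]| == 1%N.

Arguments distance_antimagic : clear implicits.

From mathcomp Require Import all_boot all_order all_algebra zify.
Set Implicit Arguments. Unset Strict Implicit. Unset Printing Implicit Defensive.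
Import GRing.Theory.
Local Open Scope ring_scope.

(* In Q_d the neighbours of x are the x + e_i, so the weight of a labelling f
   is w_f(x) = \sum_i f (x + e_i); moreover x + x = 0 in Z_2^d, so an element
   added an even number of times vanishes.
   - d odd: for f = id, w(x) = d x + \sum_i e_i = x + (1,...,1), injective.
   - 4 | d: split the coordinates into d/4 blocks of four and apply, on every
     block, a fixed bijection g of Z_2^4 given by an explicit table.  Flipping
     a coordinate outside a block leaves that block unchanged, and there are
     d - 4 (an even number of) such flips, so the block of w(x) is exactly the
     Q_4-weight of g at the block of x.  The table is chosen so that this
     Q_4-weight map is itself a bijection of Z_2^4 (with an explicit inverse
     table), hence w is injective. *)

Lemma mulrn_exp2 (V : zmodType) : (forall x : V, x + x = 0) ->
  forall (x : V) n, x *+ n = if odd n then x else 0.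
Proof.
move=> addxx x n; rewrite -[in LHS](odd_double_half n) mulrnDr -muln2 mulnC.
by rewrite mulrnA mulr2n addxx mul0rn addr0; case: (odd n).
Qed.

Lemma Z2_cases (a : 'Z_2) : a = 0 \/ a = 1.
Proof. by case: a => [[|[|n]] lt_a2] //; [left | right]; apply: val_inj. Qed.

Lemma Z2_ind (P : 'Z_2 -> Prop) : P 0 -> P 1 -> forall a, P a.
Proof. by move=> P0 P1 a; case: (Z2_cases a) => ->. Qed.

Lemma Z2_addxx (a : 'Z_2) : a + a = 0.
Proof. by case: (Z2_cases a) => ->; apply/eqP. Qed.

Lemma Z2d_addxx d (x : Z2d d) : x + x = 0.
Proof. by apply/matrixP => i j; rewrite !mxE Z2_addxx. Qed.

Lemma Z2_neqE (a b : 'Z_2) : (a != b) = (b == a + 1).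
Proof. by case: (Z2_cases a) => ->; case: (Z2_cases b) => ->. Qed.

Lemma hypercube_adjE d (x y : Z2d d) :
  hypercube_adj x y = (y \in [set x + delta_mx 0 i | i : 'I_d]).
Proof.
apply/cards1P/imsetP => [[i /setP Hi] | [i _ ->]].
- exists i => //; apply/matrixP => p q; rewrite (ord1 p) !mxE eqxx /=.
  move: (Hi q); rewrite !inE; case: (q =P i) => [-> | _].
  + by rewrite Z2_neqE => /eqP.
  + by move/negbFE/eqP => ->; rewrite addr0.
- exists i; apply/setP => q; rewrite !inE !mxE eqxx /=.
  case: (q =P i) => [-> | _]; first by rewrite Z2_neqE eqxx.
  by rewrite addr0 eqxx.
Qed.

Lemma hypercube_weightE d (A : zmodType) (f : Z2d d -> A) (x : Z2d d) :
  weight (@hypercube_adj d) f x = \sum_(i < d) f (x + delta_mx 0 i).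
Proof.
rewrite /weight (eq_bigl _ _ (hypercube_adjE x)) big_imset /=.
  by apply: eq_bigl => i; rewrite inE.
move=> i j _ _ /addrI /matrixP /(_ 0 j); rewrite !mxE !eqxx /=.
by case: (j =P i) => // _ /eqP.
Qed.

Lemma odd_distance_antimagic d :
  odd d -> distance_antimagic (Z2d d) (Z2d d) (@hypercube_adj d).
Proof.
move=> odd_d; split => //; exists id; split; first by exists id.
have wE (x : Z2d d) : weight (@hypercube_adj d) id x = x + \sum_(i < d) delta_mx 0 i.
  by rewrite hypercube_weightE big_split /= sumr_const card_ord
             (mulrn_exp2 (@Z2d_addxx d)) odd_d.
by move=> x y; rewrite !wE => /addIr.
Qed.

(* A map of Z_2^4 is represented by its four coordinate functions: t r a b c e
   is bit r (for r < 4) of the image of the nibble (a, b, c, e). *)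
Definition nibble_map := nat -> 'Z_2 -> 'Z_2 -> 'Z_2 -> 'Z_2 -> 'Z_2.

Definition nibble_id : nibble_map :=
  fun r a b c e => match r with 0 => a | 1 => b | 2 => c | _ => e end.

Definition nibble_cancel (t u : nibble_map) : Prop :=
  forall r, (r < 4)%N -> forall a b c e,
    t r (u 0 a b c e) (u 1 a b c e) (u 2 a b c e) (u 3 a b c e) = nibble_id r a b c e.

Definition nibble_weight (t : nibble_map) : nibble_map := fun r a b c e =>
  t r (a + 1) b c e + t r a (b + 1) c e + t r a b (c + 1) e + t r a b c (e + 1).

(* Tabulated maps: the nibble (a, b, c, e) is read as the binary number
   a + 2b + 4c + 8e, and the table lists the images as binary numbers. *)
Definition nibble_code (a b c e : 'Z_2) : nat := (a + 2 * b + 4 * c + 8 * e)%N.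
Definition tabulated (tab : seq nat) : nibble_map :=
  fun r a b c e => (odd (nth 0%N tab (nibble_code a b c e) %/ 2 ^ r))%:R.

Definition gadget : nibble_map :=
  tabulated [:: 3; 11; 7; 13; 2; 10; 6; 14; 8; 5; 0; 15; 1; 12; 9; 4].
Definition gadget_inv : nibble_map :=
  tabulated [:: 10; 12; 4; 0; 15; 9; 6; 2; 8; 14; 5; 1; 13; 3; 7; 11].
Definition gadget_weight_inv : nibble_map :=
  tabulated [:: 9; 1; 6; 14; 15; 7; 0; 8; 2; 10; 13; 5; 11; 3; 4; 12].

Ltac check_all_nibbles :=
  case=> [|[|[|[|r]]]] // _;
  do 4 apply: Z2_ind; apply/eqP.

Lemma gadgetK : nibble_cancel gadget_inv gadget.
Proof. by check_all_nibbles. Qed.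

Lemma gadget_invK : nibble_cancel gadget gadget_inv.
Proof. by check_all_nibbles. Qed.

Lemma gadget_weightK : nibble_cancel gadget_weight_inv (nibble_weight gadget).
Proof. by check_all_nibbles. Qed.

Section Blocks.
Variable d : nat.
Hypothesis four_dvd_d : (4 %| d)%N.

Definition blk (j : 'I_d) (k : nat) : 'I_d := insubd j (j - j %% 4 + k)%N.

Definition block (j : 'I_d) : {set 'I_d} := [set blk j k | k : 'I_4].

Definition nib (x : Z2d d) (j : 'I_d) (k : nat) : 'Z_2 := x 0 (blk j k).

Definition blockwise (t : nibble_map) (x : Z2d d) : Z2d d :=
  \row_j t (j %% 4)%N (nib x j 0) (nib x j 1) (nib x j 2) (nib x j 3).

Lemma blk_val (j : 'I_d) k : (k < 4)%N -> val (blk j k) = (j - j %% 4 + k)%N.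
Proof.
move=> lt_k4; rewrite val_insubd; case: ifP => // /negbT.
have := ltn_ord j; move: (nat_of_ord j) => n lt_nd; rewrite -leqNgt => ?; lia.
Qed.

Lemma blk_mod (j : 'I_d) k : (k < 4)%N -> (blk j k %% 4 = k)%N.
Proof. by move=> lt_k4; rewrite blk_val //; move: (nat_of_ord j) => n; lia. Qed.

Lemma blk_blk (j : 'I_d) k k' :
  (k < 4)%N -> (k' < 4)%N -> blk (blk j k) k' = blk j k'.
Proof. by move=> ? ?; apply: val_inj; rewrite !blk_val //; move: (nat_of_ord j) => n; lia. Qed.

Lemma blk_self (j : 'I_d) : blk j (j %% 4)%N = j.
Proof. by apply: val_inj; rewrite blk_val ?ltn_pmod //= subnK ?leq_mod. Qed.

Lemma blk_eq (j : 'I_d) k k' :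
  (k < 4)%N -> (k' < 4)%N -> (blk j k == blk j k') = (k == k').
Proof. by move=> ? ?; rewrite -val_eqE !blk_val //; apply/eqP/eqP; lia. Qed.

Lemma card_block (j : 'I_d) : #|block j| = 4.
Proof.
rewrite card_imset ?card_ord // => k k' /eqP.
by rewrite blk_eq // => /eqP /val_inj.
Qed.

Lemma nib_blockwise t (x : Z2d d) (j : 'I_d) k : (k < 4)%N ->
  nib (blockwise t x) j k = t k (nib x j 0) (nib x j 1) (nib x j 2) (nib x j 3).
Proof. by move=> lt_k4; rewrite {1}/nib mxE blk_mod // /nib !blk_blk. Qed.

Lemma blockwise_cancel t u : nibble_cancel t u -> cancel (blockwise u) (blockwise t).
Proof.
move=> tuK x; apply/matrixP => i j; rewrite (ord1 i) mxE !nib_blockwise // tuK ?ltn_pmod //.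
have : (j %% 4 < 4)%N by rewrite ltn_pmod.
by rewrite /nib -[in RHS](blk_self j); case: (j %% 4)%N => [|[|[|[|r]]]].
Qed.

Lemma blockwise_flip_in t (x : Z2d d) (j : 'I_d) (k : 'I_4) :
  blockwise t (x + delta_mx 0 (blk j k)) 0 j =
  t (j %% 4)%N (nib x j 0 + (0 == k)%:R) (nib x j 1 + (1 == k)%:R)
             (nib x j 2 + (2 == k)%:R) (nib x j 3 + (3 == k)%:R).
Proof. by rewrite mxE /nib !mxE !blk_eq. Qed.

Lemma blockwise_flip_out t (x : Z2d d) (j i : 'I_d) :
  i \notin block j -> blockwise t (x + delta_mx 0 i) 0 j = blockwise t x 0 j.
Proof.
move=> i_out; rewrite !mxE /nib !mxE.
have off k : (k < 4)%N -> (blk j k == i) = false.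
  move=> lt_k4; apply: contraNF i_out => /eqP <-.
  by apply/imsetP; exists (Ordinal lt_k4).
by rewrite !off // !addr0.
Qed.

Lemma weight_blockwise t (x : Z2d d) :
  weight (@hypercube_adj d) (blockwise t) x = blockwise (nibble_weight t) x.
Proof.
apply/matrixP => i j; rewrite (ord1 i) hypercube_weightE summxE.
rewrite (bigID (mem (block j))) /=.
have -> : \sum_(i | i \notin block j) blockwise t (x + delta_mx 0 i) 0 j = 0.
  rewrite (eq_bigr (fun=> blockwise t x 0 j)) => [|l /blockwise_flip_out //].
  rewrite (eq_bigl (fun l => l \in ~: block j)) => [|l]; last by rewrite inE.
  have even_out : ~~ odd #|~: block j|.
    by have := cardsC (block j); rewrite card_ord card_block; lia.
  by rewrite sumr_const (mulrn_exp2 Z2_addxx) (negbTE even_out).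
rewrite addr0 big_imset => [|k k' _ _ /eqP]; last by rewrite blk_eq // => /eqP /val_inj.
rewrite /= (eq_bigr _ (fun k _ => blockwise_flip_in t x j k)).
by rewrite !big_ord_recr big_ord0 /= add0r !mxE !addr0.
Qed.

Lemma blockwise_distance_antimagic :
  distance_antimagic (Z2d d) (Z2d d) (@hypercube_adj d).
Proof.
split => //; exists (blockwise gadget); split.
- exists (blockwise gadget_inv).
  + exact: blockwise_cancel gadgetK.
  + exact: blockwise_cancel gadget_invK.
- have weight_inj := can_inj (blockwise_cancel gadget_weightK).
  by move=> x y; rewrite !weight_blockwise => /weight_inj.
Qed.

End Blocks.

Theorem mainTheorem8 (d : nat) :
  (3 <= d)%N -> (odd d \/ d %% 4 = 0)%N ->
  distance_antimagic (Z2d d) (Z2d d) (@hypercube_adj d).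
Proof.
move=> _ [odd_d | /eqP four_dvd_d].
- exact: odd_distance_antimagic.
- exact: blockwise_distance_antimagic.
Qed.
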